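(* Let $\mathcal{M}=((X,\mathcal{C}_R),\mathcal{V})$ be a quasi-discrete closure model based on $R$ that is finitely closed and finitely backward closed, viewed as the $\mathcal{T}$-coalgebra $(X,\eta)$ with $\eta(x)=(\mathcal{V}^{-1}(x),\vec{\mathcal{C}}(x),\overleftarrow{\mathcal{C}}(x))$. For all $x_1,x_2\in X$: $x_1\simeq x_2$ iff $x_1$ and $x_2$ are behaviourally equivalent with respect to $\mathcal{T}$.
   Context: $\mathcal{C}_R(A)=A\cup\{x\mid\exists a\in A.\ aRx\}$, $\vec{\mathcal{C}}(x)=\mathcal{C}_R(\{x\})$, $\overleftarrow{\mathcal{C}}(x)=\mathcal{C}_{R^{-1}}(\{x\})$, $\mathcal{V}^{-1}(x)=\{p\in AP\mid x\in\mathcal{V}(p)\}$. Class-based bisimulation: a non-empty equivalence relation $B$ such that $(x_1,x_2)\in B$ implies $\mathcal{V}^{-1}(x_1)=\mathcal{V}^{-1}(x_2)$ and for all $C\in X/B$, $\vec{\mathcal{C}}(x_1)\cap C\neq\emptyset\iff\vec{\mathcal{C}}(x_2)\cap C\neq\emptyset$ and $\overleftarrow{\mathcal{C}}(x_1)\cap C\neq\emptyset\iff\overleftarrow{\mathcal{C}}(x_2)\cap C\neq\emptyset$; $\simeq$ is the union of such relations. $\mathcal{T}X=\mathcal{P}_{fin}(AP)\times\mathcal{P}_{fin}(X)\times\mathcal{P}_{fin}(X)$, $(\mathcal{T}f)(v,z,z')=(v,f[z],f[z'])$; behavioural equivalence means equal images under the unique homomorphism to the final $\mathcal{T}$-coalgebra.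 *)

From mathcomp Require Import all_boot.
From mathcomp Require Import boolp classical_sets cardinality.
Set Implicit Arguments. Unset Strict Implicit. Unset Printing Implicit Defensive.
Local Open Scope classical_set_scope.

Section QDCM.
Variables (AP X : Type).

Definition closureR (R : X -> X -> Prop) (A : set X) : set X :=
  A `|` [set x | exists2 a, A a & R a x].
Definition fwdC (R : X -> X -> Prop) (x : X) : set X := closureR R [set x].
Definition bwdC (R : X -> X -> Prop) (x : X) : set X :=
  closureR (fun a b => R b a) [set x].
Definition Vinv (V : AP -> set X) (x : X) : set AP := [set p | V p x].

Definition finitely_closed (R : X -> X -> Prop) := forall x, finite_set (fwdC R x).
Definition finitely_backward_closed (R : X -> X -> Prop) :=
  forall x, finite_set (bwdC R x).

Definition class_bisim (R : X -> X -> Prop) (V : AP -> set X)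
  (B : X -> X -> Prop) : Prop :=
  [/\ (exists x y, B x y),
      (forall x, B x x), (forall x y, B x y -> B y x),
      (forall x y z, B x y -> B y z -> B x z) &
      forall x1 x2, B x1 x2 ->
        [/\ Vinv V x1 = Vinv V x2,
            (forall z, (fwdC R x1 `&` [set y | B z y] !=set0) <->
                       (fwdC R x2 `&` [set y | B z y] !=set0)) &
            (forall z, (bwdC R x1 `&` [set y | B z y] !=set0) <->
                       (bwdC R x2 `&` [set y | B z y] !=set0))]].

Definition cbisimilar R V (x1 x2 : X) : Prop :=
  exists B, class_bisim R V B /\ B x1 x2.

End QDCM.

(* The functor T Y = P_fin(AP) x P_fin(Y) x P_fin(Y) *)
Definition Tobj (AP Y : Type) : Type :=
  { t : set AP * set Y * set Y |
      [/\ finite_set t.1.1, finite_set t.1.2 & finite_set t.2] }.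

Definition is_hom (AP Y Z : Type) (c : Y -> Tobj AP Y) (d : Z -> Tobj AP Z)
  (f : Y -> Z) : Prop :=
  forall y, proj1_sig (d (f y)) =
    let: (v, z, z') := proj1_sig (c y) in (v, f @` z, f @` z').

Definition is_final (AP Z : Type) (zeta : Z -> Tobj AP Z) : Prop :=
  forall (Y : Type) (c : Y -> Tobj AP Y), exists! h : Y -> Z, is_hom c zeta h.

Definition eta_model (AP X : Type) (R : X -> X -> Prop) (V : AP -> set X)
  (hV : forall x, finite_set (Vinv V x))
  (hF : finitely_closed R) (hB : finitely_backward_closed R) (x : X) : Tobj AP X :=
  exist _ (Vinv V x, fwdC R x, bwdC R x) (And3 (hV x) (hF x) (hB x)).

(* x1, x2 behaviourally equivalent: equal images under the (unique)
   homomorphism into the final coalgebra (Z, zeta) *)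
Definition beh_equiv (AP X Z : Type) (c : X -> Tobj AP X) (zeta : Z -> Tobj AP Z)
  (x1 x2 : X) : Prop :=
  forall h : X -> Z, is_hom c zeta h -> h x1 = h x2.

From mathcomp Require Import all_boot.
From mathcomp Require Import boolp classical_sets cardinality.
Set Implicit Arguments. Unset Strict Implicit. Unset Printing Implicit Defensive.
Local Open Scope classical_set_scope.

(* Then:
   - (bisimilarity => behavioural equivalence)  For an equivalence B on the
     carrier of any T-coalgebra c such that T(class map) o c is constant on
     B-classes, the class map x |-> [x]_B is a homomorphism into a quotient
     coalgebra on classes.  A class-based bisimulation B makes eta_model
     compatible in this sense, so any homomorphism h into the final coalgebra
     factors (by finality) through [_]_B, and B-related points get equal
     images.
   - (behavioural equivalence => bisimilarity)  The kernel of any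
     homomorphism out of eta_model is a class-based bisimulation, because the
     class of z in the kernel of h meets a set A exactly when h z is in h[A]. *)

Definition Tmap_val (AP Y Z : Type) (f : Y -> Z) (t : set AP * set Y * set Y)
  : set AP * set Z * set Z :=
  let: (v, z, z') := t in (v, f @` z, f @` z').

Lemma Tmap_val_finite (AP Y Z : Type) (f : Y -> Z) (t : Tobj AP Y) :
  let u := Tmap_val f (proj1_sig t) in
  [/\ finite_set u.1.1, finite_set u.1.2 & finite_set u.2].
Proof.
by case: t => -[[v z] z'] [Fv Fz Fz'] /=; split=> //; apply: finite_image.
Qed.

Definition Tmap (AP Y Z : Type) (f : Y -> Z) (t : Tobj AP Y) : Tobj AP Z :=
  exist _ (Tmap_val f (proj1_sig t)) (Tmap_val_finite f t).

Lemma is_hom_comp (AP Y Z W : Type) (c : Y -> Tobj AP Y) (d : Z -> Tobj AP Z)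
  (e : W -> Tobj AP W) (f : Y -> Z) (g : Z -> W) :
  is_hom c d f -> is_hom d e g -> is_hom c e (g \o f).
Proof.
move=> fh gh y; rewrite /= gh fh.
by case: (proj1_sig (c y)) => -[v z] z' /=; rewrite !image_comp.
Qed.

Lemma final_hom_unique (AP Y Z : Type) (zeta : Z -> Tobj AP Z)
  (c : Y -> Tobj AP Y) (f g : Y -> Z) :
  is_final zeta -> is_hom c zeta f -> is_hom c zeta g -> f = g.
Proof.
move=> /(_ _ c) [u [_ uU]] fh gh.
by rewrite -(uU _ fh) -(uU _ gh).
Qed.

Definition cls (X : Type) (B : X -> X -> Prop) (x : X) : set X := [set y | B x y].

Lemma kernel_class_meet (X Z : Type) (h : X -> Z) (A : set X) (z : X) :
  (A `&` cls (fun a b => h a = h b) z !=set0) <-> (h @` A) (h z).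
Proof.
split; first by move=> [y [Ay e]]; exists y.
by move=> [y Ay e]; exists y.
Qed.

(* The quotient of a coalgebra c by B: a class C = [x]_B is sent to
   T([_]_B)(c x) for a chosen representative x; other sets are sent to the
   empty triple. *)
Definition quotient_coalg (AP X : Type) (c : X -> Tobj AP X)
  (B : X -> X -> Prop) (C : set X) : Tobj AP (set X) :=
  match pselect (exists x, C = cls B x) with
  | left e => Tmap (cls B) (c (proj1_sig (cid e)))
  | right _ => exist _ (set0, set0, set0)
      (And3 (@finite_set0 _) (@finite_set0 _) (@finite_set0 _))
  end.

Section Quotient.
Variables (AP X : Type) (B : X -> X -> Prop).
Hypotheses (B_refl : forall x, B x x) (B_sym : forall x y, B x y -> B y x)
  (B_trans : forall x y z, B x y -> B y z -> B x z).

Lemma cls_eq a b : B a b -> cls B a = cls B b.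
Proof.
move=> Bab; apply/seteqP; split=> t /= Bt; last exact: B_trans Bab Bt.
exact: B_trans (B_sym Bab) Bt.
Qed.

Lemma classes_met_eq (F : X -> set X)
  (F_transfer : forall a b, B a b ->
     forall z, (F a `&` cls B z !=set0) <-> (F b `&` cls B z !=set0))
  a b : B a b -> cls B @` F a = cls B @` F b.
Proof.
suff sub : forall a b, B a b -> cls B @` F a `<=` cls B @` F b.
  by move=> Bab; apply/seteqP; split; apply: sub => //; apply: B_sym.
move=> {}a {}b Bab _ [y Fy <-].
have [|y' [Fy' Byy']] := (F_transfer _ _ Bab y).1; first by exists y; split => //; apply: B_refl.
by exists y' => //; rewrite (cls_eq Byy').
Qed.

Lemma cls_is_hom (c : X -> Tobj AP X)
  (c_compat : forall a b, B a b ->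
     Tmap_val (cls B) (proj1_sig (c a)) = Tmap_val (cls B) (proj1_sig (c b))) :
  is_hom c (quotient_coalg c B) (cls B).
Proof.
move=> y; rewrite /quotient_coalg; case: pselect => [e|]; last first.
  by case; exists y.
case: (cid e) => x /= ex.
have Bxy : B x y by rewrite -[B x]/(cls B x) -ex; apply: B_refl.
exact: c_compat.
Qed.

End Quotient.

Section ClosureModel.
Variables (AP X : Type) (R : X -> X -> Prop) (V : AP -> set X).
Hypotheses (hV : forall x, finite_set (Vinv V x))
  (hF : finitely_closed R) (hB : finitely_backward_closed R).

Let eta := eta_model hV hF hB.

Lemma class_bisim_compat B : class_bisim R V B -> forall a b, B a b ->
  Tmap_val (cls B) (proj1_sig (eta a)) = Tmap_val (cls B) (proj1_sig (eta b)).
Proof.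
move=> [_ Br Bs Bt clauses] a b Bab /=.
have [-> _ _] := clauses _ _ Bab.
rewrite (@classes_met_eq _ _ Br Bs Bt (fwdC R) _ a b Bab); last first.
  by move=> ? ? /clauses[].
by rewrite (@classes_met_eq _ _ Br Bs Bt (bwdC R) _ a b Bab) // => ? ? /clauses[].
Qed.

Lemma kernel_class_bisim (Z : Type) (d : Z -> Tobj AP Z) (h : X -> Z) (x0 : X) :
  is_hom eta d h -> class_bisim R V (fun a b => h a = h b).
Proof.
move=> hh; split; [by exists x0, x0 | by [] | by [] | by move=> ? ? ? -> -> |].
move=> a b hab.
have := hh a; rewrite hab hh /= => -[-> Efwd Ebwd].
by split=> // z; rewrite !kernel_class_meet ?Efwd ?Ebwd.
Qed.

End ClosureModel.

Theorem corollary1 (AP X : Type) (R : X -> X -> Prop) (V : AP -> set X)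
  (hV : forall x, finite_set (Vinv V x))
  (hF : finitely_closed R) (hB : finitely_backward_closed R)
  (Z : Type) (zeta : Z -> Tobj AP Z) (hZ : is_final zeta)
  (x1 x2 : X) :
  cbisimilar R V x1 x2 <-> beh_equiv (eta_model hV hF hB) zeta x1 x2.
Proof.
split.
- move=> [B [bisB Bx12]] h hh.
  have [_ Br Bs Bt _] := bisB.
  have qh := cls_is_hom Br (class_bisim_compat hV hF hB bisB).
  have [g [gh _]] := hZ _ (quotient_coalg (eta_model hV hF hB) B).
  rewrite (final_hom_unique hZ hh (is_hom_comp qh gh)) /=.
  by rewrite (cls_eq Bs Bt Bx12).
- move=> beh; have [h [hh _]] := hZ _ (eta_model hV hF hB).
  by exists (fun a b => h a = h b); split; [exact: (kernel_class_bisim x1 hh) | exact: beh].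
Qed.
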